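(* Let $B$ be a skew brace. Then a subset $P\subseteq B$ is an equivalence class of some congruence on $B$ if and only if $P$ is a paragon in $\mathrm{T}(B)$.
   Context: A skew brace is $(B,+,\cdot)$ with $(B,+)$ and $(B,\cdot)$ groups and $a(b+c)=ab-a+ac$. A congruence on $B$ is an equivalence relation compatible with both group operations. $\mathrm{T}(B)$ is $B$ with ternary operation $[a,b,c]=a-b+c$ and the multiplication of $B$. A normal sub-heap is a non-empty subset $S$ closed under $[-,-,-]$ with $[[a,e,s],a,e]\in S$ for all $a$ and $e,s\in S$; $a\sim_S b$ iff $[a,b,s]\in S$ for some (equivalently all) $s\in S$. A sub-heap $S$ is closed if $[ts',ts,s]\in S$ and $[s't,st,s]\in S$ for all $s,s'\in S$, $t$. A paragon is a non-empty normal sub-heap $P$ all of whose $\sim_P$-classes are closed sub-heaps. *)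

Record SkewBrace := {
  carrier :> Type;
  add : carrier -> carrier -> carrier;
  opp : carrier -> carrier;
  zero : carrier;
  mul : carrier -> carrier -> carrier;
  inv : carrier -> carrier;
  one : carrier;
  addA : forall a b c, add a (add b c) = add (add a b) c;
  add0l : forall a, add zero a = a;
  add0r : forall a, add a zero = a;
  addNl : forall a, add (opp a) a = zero;
  addNr : forall a, add a (opp a) = zero;
  mulA : forall a b c, mul a (mul b c) = mul (mul a b) c;
  mul1l : forall a, mul one a = a;
  mul1r : forall a, mul a one = a;
  mulVl : forall a, mul (inv a) a = one;
  mulVr : forall a, mul a (inv a) = one;
  brace_law : forall a b c,
    mul a (add b c) = add (add (mul a b) (opp a)) (mul a c)
}.

Section Defs.
Variable B : SkewBrace.

Definition congruence (R : B -> B -> Prop) : Prop :=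
  (forall a, R a a) /\
  (forall a b, R a b -> R b a) /\
  (forall a b c, R a b -> R b c -> R a c) /\
  (forall a a' b b', R a a' -> R b b' -> R (add B a b) (add B a' b')) /\
  (forall a a' b b', R a a' -> R b b' -> R (mul B a b) (mul B a' b')).

Definition is_class_of (R : B -> B -> Prop) (P : B -> Prop) : Prop :=
  exists a, forall x, P x <-> R a x.

(* The truss T(B): ternary heap operation [a,b,c] = a - b + c,
   multiplication is that of B. *)
Definition tern (a b c : B) : B := add B (add B a (opp B b)) c.

Definition sub_heap (S : B -> Prop) : Prop :=
  forall a b c, S a -> S b -> S c -> S (tern a b c).

Definition normal_sub_heap (S : B -> Prop) : Prop :=
  (exists s, S s) /\ sub_heap S /\
  (forall a e s, S e -> S s -> S (tern (tern a e s) a e)).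

Definition sim (S : B -> Prop) (a b : B) : Prop :=
  exists s, S s /\ S (tern a b s).

Definition closed_sub_heap (S : B -> Prop) : Prop :=
  sub_heap S /\
  (forall s s' t, S s -> S s' ->
     S (tern (mul B t s') (mul B t s) s) /\
     S (tern (mul B s' t) (mul B s t) s)).

Definition paragon (P : B -> Prop) : Prop :=
  (exists p, P p) /\ normal_sub_heap P /\
  (forall a, closed_sub_heap (fun x => sim P a x)).

End Defs.

From Stdlib Require Import Setoid.

(* If P is the class of a for a congruence R, then x ~_P y holds exactly when
   R x y, so the ~_P-classes are the R-classes, and normality and closedness
   are instances of the compatibility of R with [-,-,-] and multiplication.
   Conversely, for a fixed p in P, x ~_P y iff x - y + p is in P: closure of
   P under [-,-,-] makes ~_P an equivalence, normality makes it compatible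
   with +, closedness of the ~_P-class of a sends a ~_P a' to ta ~_P ta' and
   at ~_P a't, and P is the ~_P-class of p. *)

Section SkewBraceTruss.
Variable B : SkewBrace.

Local Notation "x + y" := (add B x y).
Local Notation "- x" := (opp B x).
Local Notation "x - y" := (add B x (opp B y)).
Local Notation "x * y" := (mul B x y).

Lemma opp_unique (x y : B) : x + y = zero B -> - x = y.
Proof.
  intro Hxy. rewrite <- (add0r B (- x)), <- Hxy, addA, addNl, add0l.
  reflexivity.
Qed.

Lemma oppD (x y : B) : - (x + y) = - y + - x.
Proof.
  apply opp_unique. rewrite addA, <- (addA B x y), addNr, add0r, addNr.
  reflexivity.
Qed.

Lemma oppK (x : B) : - - x = x.
Proof. apply opp_unique, addNl. Qed.

Lemma addrK (x y : B) : x + y - y = x.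
Proof. rewrite <- addA, addNr, add0r. reflexivity. Qed.

Lemma addrNK (x y : B) : x - y + y = x.
Proof. rewrite <- addA, addNl, add0r. reflexivity. Qed.

Ltac group_simpl_in H :=
  unfold tern in H;
  repeat rewrite ?oppD, ?oppK, ?addA, ?addrK, ?addrNK,
    ?add0l, ?add0r, ?addNr, ?addNl in H.

Lemma ternKl (x y : B) : tern B x x y = y.
Proof. unfold tern. rewrite addNr, add0l. reflexivity. Qed.

Lemma ternKr (x y : B) : tern B x y y = x.
Proof. unfold tern. apply addrNK. Qed.

Section Congruence.
Variable R : B -> B -> Prop.
Hypothesis HR : congruence B R.

Lemma congr_refl (x : B) : R x x.
Proof. apply (proj1 HR). Qed.

Lemma congr_sym (x y : B) : R x y -> R y x.
Proof. apply (proj1 (proj2 HR)). Qed.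

Lemma congr_trans (x y z : B) : R x y -> R y z -> R x z.
Proof. apply (proj1 (proj2 (proj2 HR))). Qed.

Lemma congr_add (x x' y y' : B) : R x x' -> R y y' -> R (x + y) (x' + y').
Proof. apply (proj1 (proj2 (proj2 (proj2 HR)))). Qed.

Lemma congr_mul (x x' y y' : B) : R x x' -> R y y' -> R (x * y) (x' * y').
Proof. apply (proj2 (proj2 (proj2 (proj2 HR)))). Qed.

Lemma congr_opp (x y : B) : R x y -> R (- x) (- y).
Proof.
  intro Hxy. apply congr_sym.
  assert (H : R (- x + x - y) (- x + y - y)).
  { apply congr_add; [apply congr_add|]; auto using congr_refl. }
  rewrite addNl, add0l, addrK in H. exact H.
Qed.

Lemma congr_tern (x x' y y' z z' : B) :
  R x x' -> R y y' -> R z z' -> R (tern B x y z) (tern B x' y' z').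
Proof.
  intros Hx Hy Hz. unfold tern.
  auto using congr_add, congr_opp.
Qed.

Lemma congr_ternKr (x y z : B) : R (tern B x y z) z <-> R x y.
Proof.
  split; intro H.
  - pose proof (congr_tern _ _ _ _ _ _ H (congr_refl z) (congr_refl y)) as Hxy.
    group_simpl_in Hxy. exact Hxy.
  - pose proof (congr_tern _ _ _ _ _ _ H (congr_refl y) (congr_refl z)) as Hxy.
    rewrite ternKl in Hxy. exact Hxy.
Qed.

Lemma congr_class_sub_heap (a : B) : sub_heap B (R a).
Proof.
  intros x y z Hx Hy Hz.
  pose proof (congr_tern _ _ _ _ _ _ Hx Hy Hz) as H.
  rewrite ternKl in H. exact H.
Qed.

Section CongruenceClass.
Variables (P : B -> Prop) (a : B).
Hypothesis HP : forall x, P x <-> R a x.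

Lemma sim_congr_class (x y : B) : sim B P x y <-> R x y.
Proof.
  split.
  - intros [s [Ps Pt]]. apply HP in Ps, Pt.
    apply (congr_ternKr _ _ s), (congr_trans _ a); auto using congr_sym.
  - intro Hxy. exists a. split; apply HP; [apply congr_refl|].
    apply congr_sym, congr_ternKr, Hxy.
Qed.

Lemma congr_class_normal_sub_heap : normal_sub_heap B P.
Proof.
  split; [exists a; apply HP, congr_refl|]. split.
  - intros x y z Hx Hy Hz. apply HP in Hx, Hy, Hz. apply HP.
    exact (congr_class_sub_heap a x y z Hx Hy Hz).
  - intros x e s He Hs. apply HP in He, Hs. apply HP.
    pose proof (congr_tern _ _ _ _ _ _
      (congr_tern _ _ _ _ _ _ (congr_refl x) He Hs) (congr_refl x) He) as H.
    rewrite ternKr, ternKl in H. exact H.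
Qed.

Lemma congr_class_sim_closed (b : B) : closed_sub_heap B (fun x => sim B P b x).
Proof.
  split.
  - intros x y z Hx Hy Hz. apply sim_congr_class in Hx, Hy, Hz.
    apply sim_congr_class. exact (congr_class_sub_heap b x y z Hx Hy Hz).
  - intros s s' t Hs Hs'. apply sim_congr_class in Hs, Hs'.
    split; apply sim_congr_class.
    + pose proof (congr_tern _ _ _ _ _ _ (congr_mul _ _ _ _ (congr_refl t) Hs')
        (congr_mul _ _ _ _ (congr_refl t) Hs) Hs) as H.
      rewrite ternKl in H. exact H.
    + pose proof (congr_tern _ _ _ _ _ _ (congr_mul _ _ _ _ Hs' (congr_refl t))
        (congr_mul _ _ _ _ Hs (congr_refl t)) Hs) as H.
      rewrite ternKl in H. exact H.
Qed.

End CongruenceClass.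

Lemma congr_class_paragon (P : B -> Prop) : is_class_of B R P -> paragon B P.
Proof.
  intros [a HP]. split; [exists a; apply HP, congr_refl|]. split.
  - exact (congr_class_normal_sub_heap P a HP).
  - exact (congr_class_sim_closed P a HP).
Qed.

End Congruence.

Section NormalSubHeap.
Variables (S : B -> Prop) (s : B).
Hypotheses (HS : normal_sub_heap B S) (Ss : S s).

Let S_tern (x y z : B) : S x -> S y -> S z -> S (tern B x y z).
Proof. apply HS. Qed.

Lemma sim_normal_sub_heap (x y : B) : sim B S x y <-> S (x - y + s).
Proof.
  split.
  - intros [r [Sr Sxyr]].
    pose proof (S_tern _ _ _ Sxyr Sr Ss) as H.
    group_simpl_in H. exact H.
  - intro H. exists s. split; [exact Ss | exact H].
Qed.

Lemma sim_refl (x : B) : sim B S x x.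
Proof. apply sim_normal_sub_heap. rewrite addNr, add0l. exact Ss. Qed.

Lemma sim_sym (x y : B) : sim B S x y -> sim B S y x.
Proof.
  rewrite !sim_normal_sub_heap. intro H.
  pose proof (S_tern _ _ _ Ss H Ss) as H'.
  group_simpl_in H'. exact H'.
Qed.

Lemma sim_trans (x y z : B) : sim B S x y -> sim B S y z -> sim B S x z.
Proof.
  rewrite !sim_normal_sub_heap. intros Hxy Hyz.
  pose proof (S_tern _ _ _ Hxy Ss Hyz) as H.
  group_simpl_in H. exact H.
Qed.

Lemma sim_add (x x' y y' : B) :
  sim B S x x' -> sim B S y y' -> sim B S (x + y) (x' + y').
Proof.
  rewrite !sim_normal_sub_heap. intros Hx Hy.
  (* normality with a := x + s and e := s puts x + (y - y') - x + s in S *)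
  pose proof (proj2 (proj2 HS) (x + s) s _ Ss Hy) as Hconj.
  pose proof (S_tern _ _ _ Hconj Ss Hx) as H.
  group_simpl_in H. rewrite oppD, !addA. exact H.
Qed.

Lemma normal_sub_heap_sim_class (x : B) : S x <-> sim B S s x.
Proof.
  rewrite sim_normal_sub_heap. split; intro H.
  - exact (S_tern _ _ _ Ss H Ss).
  - pose proof (S_tern _ _ _ Ss H Ss) as H'.
    group_simpl_in H'. exact H'.
Qed.

Lemma normal_sub_heap_is_sim_class : is_class_of B (sim B S) S.
Proof. exists s. exact normal_sub_heap_sim_class. Qed.

End NormalSubHeap.

Section Paragon.
Variables (P : B -> Prop) (p : B).
Hypotheses (HP : paragon B P) (Pp : P p).

Let HN : normal_sub_heap B P := proj1 (proj2 HP).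

Lemma paragon_sim_mul_lr (a a' t : B) :
  sim B P a a' -> sim B P (t * a) (t * a') /\ sim B P (a * t) (a' * t).
Proof.
  intro Ha.
  destruct (proj2 (proj2 (proj2 HP) a) a a' t (sim_refl P p HN Pp a) Ha) as [Hl Hr].
  rewrite !(sim_normal_sub_heap P p HN Pp) in *.
  group_simpl_in Hl. group_simpl_in Hr. split; assumption.
Qed.

Lemma paragon_sim_congruence : congruence B (sim B P).
Proof.
  split; [|split; [|split; [|split]]].
  - exact (sim_refl P p HN Pp).
  - exact (sim_sym P p HN Pp).
  - exact (sim_trans P p HN Pp).
  - exact (sim_add P p HN Pp).
  - intros x x' y y' Hx Hy. apply (sim_trans P p HN Pp _ (x' * y)).
    + apply paragon_sim_mul_lr, Hx.
    + apply paragon_sim_mul_lr, Hy.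
Qed.

End Paragon.

End SkewBraceTruss.

Theorem corollary3p17 (B : SkewBrace) (P : B -> Prop) :
  (exists R : B -> B -> Prop, congruence B R /\ is_class_of B R P) <->
  paragon B P.
Proof.
  split.
  - intros [R [HR HP]]. exact (congr_class_paragon B R HR P HP).
  - intro HP. destruct (proj1 HP) as [p Pp]. exists (sim B P). split.
    + exact (paragon_sim_congruence B P p HP Pp).
    + exact (normal_sub_heap_is_sim_class B P p (proj1 (proj2 HP)) Pp).
Qed.
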